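(* For any finite alphabet $\mathfrak{G}$ and any $\mathfrak{G}$-trees $\mathfrak{s}$, $\mathfrak{t}$, $\mathfrak{s}'$, $\mathfrak{t}'$ such that $\mathfrak{s} \preceq \mathfrak{t}$ and $\mathfrak{s}' \preceq \mathfrak{t}'$, the intervals $[\mathfrak{s},\mathfrak{t}]$ and $[\mathfrak{s}',\mathfrak{t}']$ of the $\mathfrak{G}$-prefix poset are isomorphic as posets if and only if $\mathrm{sh}(\lozenge_{|\mathfrak{s}|}[\mathfrak{t}\setminus\mathfrak{s}]) = \mathrm{sh}(\lozenge_{|\mathfrak{s}'|}[\mathfrak{t}'\setminus\mathfrak{s}'])$.
   Context: $\mathfrak{G}$ is a finite alphabet (letters with arities $\geq 1$). A $\mathfrak{G}$-tree is either the leaf (the tree with no internal node) or $\mathtt{a}[\mathfrak{s}_1,\dots,\mathfrak{s}_{|\mathtt{a}|}]$ with root decorated by $\mathtt{a}\in\mathfrak{G}$; $|\mathfrak{t}|$ denotes the number of leaves, ordered left to right, and $\mathfrak{t}\circ[\mathfrak{r}_1,\dots,\mathfrak{r}_{|\mathfrak{t}|}]$ is obtained by grafting the root of each $\mathfrak{r}_i$ onto the $i$-th leaf of $\mathfrak{t}$. The $\mathfrak{G}$-prefix poset is the set of $\mathfrak{G}$-trees ordered by $\mathfrak{s}\preceq\mathfrak{t}$ iff $\mathfrak{s}$ is a prefix of $\mathfrak{t}$, i.e. $\mathfrak{t}=\mathfrak{s}\circ[\mathfrak{r}_1,\dots,\mathfrak{r}_{|\mathfrak{s}|}]$ for some $\mathfrak{G}$-trees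 $\mathfrak{r}_i$ (equivalently, $\mathfrak{t}$ is obtained from $\mathfrak{s}$ by successively replacing leaves by internal nodes decorated by letters). In this case the difference $\mathfrak{t}\setminus\mathfrak{s}$ is the (unique) forest $(\mathfrak{r}_1,\dots,\mathfrak{r}_{|\mathfrak{s}|})$, and $\lozenge_k[\mathfrak{r}_1,\dots,\mathfrak{r}_k]$ is the tree obtained by grafting $\mathfrak{r}_1,\dots,\mathfrak{r}_k$ onto a root decorated by a new letter $\lozenge_k$ of arity $k$. A shadow is a finite (possibly empty) multiset of shadows (a nonplanar undecorated rooted tree). For a $\mathfrak{G}$-tree $\mathfrak{t}$ different from the leaf with root of arity $k$, $\mathrm{sh}(\mathfrak{t})$ is the multiset of the $\mathrm{sh}(\mathfrak{t}(i))$ for those $i\in[k]$ such that the $i$-th subtree $\mathfrak{t}(i)$ of the root is not the leaf. *)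

From Stdlib Require Import List Permutation.
From mathcomp Require Import all_boot.

Set Implicit Arguments.
Unset Strict Implicit.
Unset Printing Implicit Defensive.

Inductive tree (G : Type) : Type :=
| Leaf : tree G
| Node : G -> seq (tree G) -> tree G.
Arguments Leaf {G}.

Section Trees.
Variable G : Type.

Fixpoint wf (ar : G -> nat) (t : tree G) : bool :=
  match t with
  | Leaf => true
  | Node a ts => (size ts == ar a) && all (wf ar) ts
  end.

Fixpoint nleaves (t : tree G) : nat :=
  match t with
  | Leaf => 1
  | Node _ ts => sumn (map nleaves ts)
  end.

(* Grafting the trees of rs, left to right, onto the leaves of t;
   returns the grafted tree and the unused trees. *)
Fixpoint graft_aux (t : tree G) (rs : seq (tree G)) {struct t}
  : tree G * seq (tree G) :=
  match t with
  | Leaf => match rs with [::] => (Leaf, [::]) | r :: rs' => (r, rs') end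
  | Node a ts =>
      let p := (fix gl (us : seq (tree G)) (rs : seq (tree G)) {struct us}
                  : seq (tree G) * seq (tree G) :=
                  match us with
                  | [::] => ([::], rs)
                  | u :: us' =>
                      let (u', rs1) := graft_aux u rs in
                      let (us'', rs2) := gl us' rs1 in (u' :: us'', rs2)
                  end) ts rs in
      (Node a p.1, p.2)
  end.

Definition graft (t : tree G) (rs : seq (tree G)) : tree G := (graft_aux t rs).1.

Definition prefix (ar : G -> nat) (s t : tree G) : Prop :=
  exists rs : seq (tree G),
    size rs = nleaves s /\ all (wf ar) rs /\ t = graft s rs.

Definition in_interval (ar : G -> nat) (s t u : tree G) : Prop :=
  wf ar u /\ prefix ar s u /\ prefix ar u t.

End Trees.

Fixpoint tmap (G H : Type) (h : G -> H) (t : tree G) : tree H :=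
  match t with
  | Leaf => Leaf
  | Node a ts => Node (h a) (map (tmap h) ts)
  end.

(* lozenge_k [r_1, ..., r_k] : a root decorated by a new letter (None) of
   arity k = size rs, over the alphabet option G. *)
Definition diamond (G : Type) (rs : seq (tree G)) : tree (option G) :=
  Node None (map (tmap Some) rs).

Definition intervals_iso (G : Type) (ar : G -> nat) (s t s' t' : tree G) : Prop :=
  exists (f g : tree G -> tree G),
    (forall u, in_interval ar s t u ->
               in_interval ar s' t' (f u) /\ g (f u) = u) /\
    (forall v, in_interval ar s' t' v ->
               in_interval ar s t (g v) /\ f (g v) = v) /\
    (forall u v, in_interval ar s t u -> in_interval ar s t v ->
                 (prefix ar u v <-> prefix ar (f u) (f v))).

(* Shadows: finite multisets of shadows, represented by rose trees
   whose children lists are compared up to permutation. *)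
Inductive rtree : Type := RNode : list rtree -> rtree.

Inductive sheq : rtree -> rtree -> Prop :=
| sheq_node (l1 l2 l2' : list rtree) :
    Permutation l2 l2' -> Forall2 sheq l1 l2' -> sheq (RNode l1) (RNode l2).

(* sh(t) : multiset of sh(t(i)) over the non-leaf subtrees of the root.
   (The value on the leaf is irrelevant; sh is only used on non-leaves.) *)
Fixpoint sh (G : Type) (t : tree G) : rtree :=
  match t with
  | Leaf => RNode [::]
  | Node _ ts =>
      RNode ((fix shl (us : seq (tree G)) : list rtree :=
                match us with
                | [::] => [::]
                | Leaf :: us' => shl us'
                | u :: us' => sh u :: shl us'
                end) ts)
  end.

From Pilot Require Import Defs.
From Stdlib Require Import List Permutation.
From mathcomp Require Import all_boot zify.

(** Writing [t = s o rs], cutting at the leaves of [s] identifies the interval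
  [[s, t]] with the down-set of [rs] in the componentwise prefix order on
  forests, so everything reduces to comparing such down-sets.
  Leaf components of [rs] contribute nothing, components may be permuted, and a
  component [b[cs]] contributes a copy of the down-set of [cs]: hence equal
  shadows give isomorphic down-sets.
  Conversely, the atoms of the down-set of [rs] are the forests with a single
  node, one for each non-leaf component [b[cs]]. The elements above such an atom
  whose non-minimal lower bounds all lie above it form a copy of the down-set
  of [cs], and the elements not above it form the down-set of [rs] with that
  component replaced by a leaf. An isomorphism preserves atoms and these two
  sets, so induction on the number of nodes recovers the shadows. *)

Set Implicit Arguments.
Unset Strict Implicit.
Unset Printing Implicit Defensive.

(** * Prefix order on trees and forests *)

Section Prefix.
Variable G : Type.
Notation tree := (tree G).

Lemma tree_forest_ind (P : tree -> Prop) (Q : seq tree -> Prop) :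
  P Leaf -> (forall a ts, Q ts -> P (Node a ts)) ->
  Q [::] -> (forall t ts, P t -> Q ts -> Q (t :: ts)) ->
  (forall t, P t) /\ (forall ts, Q ts).
Proof.
move=> PL PN Qnil Qcons.
have tP : forall t, P t.
  refine (fix tP t : P t := match t with
    | Leaf => PL
    | Node a ts => PN a ts ((fix fP ts : Q ts := match ts with
        | [::] => Qnil
        | t :: ts' => Qcons t ts' (tP t) (fP ts') end) ts) end).
by split=> //; elim=> // t ts; apply: Qcons.
Qed.

(* The inner fixpoint is [fprefix], inlined for the guard condition. *)
Fixpoint tprefix (u v : tree) : Prop :=
  match u, v with
  | Leaf, _ => True
  | Node _ _, Leaf => False
  | Node a us, Node b vs => a = b /\
      (fix fprefix us vs := match us, vs with
        | [::], [::] => True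
        | u1 :: us1, v1 :: vs1 => tprefix u1 v1 /\ fprefix us1 vs1
        | _, _ => False end) us vs
  end.

Fixpoint fprefix (us vs : seq tree) : Prop :=
  match us, vs with
  | [::], [::] => True
  | u1 :: us1, v1 :: vs1 => tprefix u1 v1 /\ fprefix us1 vs1
  | _, _ => False
  end.

Lemma tprefix_node a b us vs :
  tprefix (Node a us) (Node b vs) = (a = b /\ fprefix us vs).
Proof. by []. Qed.

Lemma tprefix_leaf u : tprefix u Leaf -> u = Leaf.
Proof. by case: u. Qed.

Lemma tprefix_node_inv a us v : tprefix (Node a us) v ->
  exists2 vs, v = Node a vs & fprefix us vs.
Proof. by case: v => // b vs [<-]; exists vs. Qed.

Definition is_node (t : tree) : bool := if t is Node _ _ then true else false.

Lemma tprefix_is_node u v : tprefix u v -> is_node u -> is_node v.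
Proof. by case: u v => [|a us] [|b vs]. Qed.

Lemma fprefix_size us vs : fprefix us vs -> size us = size vs.
Proof. by elim: us vs => [|u us IH] [|v vs] //= [_ /IH ->]. Qed.

Lemma fprefix_refl us : fprefix us us.
Proof.
by move: us; apply: (proj2 (@tree_forest_ind (fun u => tprefix u u) _ _ _ _ _)).
Qed.

Lemma fprefix_trans us vs ws : fprefix us vs -> fprefix vs ws -> fprefix us ws.
Proof.
move: us vs ws; apply: (proj2 (@tree_forest_ind
  (fun u => forall v w, tprefix u v -> tprefix v w -> tprefix u w) _ _ _ _ _)) => //.
- move=> a ts IH [|b vs] [|c ws] //= [-> le_ts] [-> le_vs].
  by split=> //; apply: IH le_ts le_vs.
- by move=> [|? ?] [|? ?].
- move=> t ts IHt IHts [|v vs] [|w ws] //= [le_tv le_ts] [le_vw le_vs].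
  by split; [apply: IHt le_tv le_vw | apply: IHts le_ts le_vs].
Qed.

Lemma fprefix_cat X X' Y Y' : size X = size X' ->
  fprefix (X ++ Y) (X' ++ Y') <-> fprefix X X' /\ fprefix Y Y'.
Proof.
elim: X X' => [|x X IH] [|x' X'] //= => [_ | [/IH ->]]; last by tauto.
by split=> // -[].
Qed.

Lemma fprefix_cat_cons X X' x x' Y Y' : size X = size X' ->
  fprefix (X ++ x :: Y) (X' ++ x' :: Y') <->
  [/\ fprefix X X', tprefix x x' & fprefix Y Y'].
Proof. by move/fprefix_cat=> ->; rewrite /=; split=> [[? []] | []]. Qed.

Lemma fprefix_cat_consl X x Y vs : fprefix (X ++ x :: Y) vs ->
  exists X' x' Y', [/\ vs = X' ++ x' :: Y', size X' = size X,
                      fprefix X X', tprefix x x' & fprefix Y Y'].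
Proof.
elim: X vs => [|u X IH] [|v vs] //= [H1 H2]; first by exists [::], v, vs.
have [X' [x' [Y' [-> <- *]]]] := IH _ H2.
by exists (v :: X'), x', Y'.
Qed.

Lemma fprefix_cat_consr y X' x' Y' : fprefix y (X' ++ x' :: Y') ->
  exists X x Y, [/\ y = X ++ x :: Y, size X = size X',
                   fprefix X X', tprefix x x' & fprefix Y Y'].
Proof.
elim: X' y => [|v X' IH] [|u y] //= [H1 H2]; first by exists [::], u, y.
have [X [x [Y [-> <- *]]]] := IH _ H2.
by exists (u :: X), x, Y.
Qed.

Lemma fprefix_nth us vs i : fprefix us vs ->
  tprefix (nth Leaf us i) (nth Leaf vs i).
Proof.
elim: us vs i => [|u us IH] [|v vs] [|i] //= [H1 H2] //; exact: IH.
Qed.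

Definition leaves n : seq tree := nseq n Leaf.

Lemma leaves_fprefix vs : fprefix (leaves (size vs)) vs.
Proof. by elim: vs => //= v vs ->. Qed.

Lemma fprefix_leaves us n : fprefix us (leaves n) -> us = leaves n.
Proof. by elim: n us => [|n IH] [|u us] //= [/tprefix_leaf -> /IH ->]. Qed.

Definition below (rs : seq tree) (y : seq tree) : Prop := fprefix y rs.

Lemma forest_leaves_or_node y : y = leaves (size y) \/
  exists Y1 c ws Y2, y = Y1 ++ Node c ws :: Y2.
Proof.
elim: y => [|u y IH]; first by left.
case: u => [|c ws]; last by right; exists [::], c, ws, y.
case: IH => [Ey | [Y1 [c [ws [Y2 ->]]]]]; first by left; rewrite /= -Ey.
by right; exists (Leaf :: Y1), c, ws, Y2.
Qed.

End Prefix.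

Arguments leaves {G} n.
Arguments tprefix {G}.
Arguments fprefix {G}.
Arguments is_node {G}.
Arguments below {G}.

(** * Order isomorphisms, atoms and cones *)

Definition order_iso (A B : Type) (P : A -> Prop) (le : A -> A -> Prop)
    (Q : B -> Prop) (le' : B -> B -> Prop) (f : A -> B) (g : B -> A) :=
  [/\ forall u, P u -> Q (f u) /\ g (f u) = u,
      forall v, Q v -> P (g v) /\ f (g v) = v &
      forall u v, P u -> P v -> (le u v <-> le' (f u) (f v))].

Definition isomorphic (A B : Type) (P : A -> Prop) (le : A -> A -> Prop)
    (Q : B -> Prop) (le' : B -> B -> Prop) :=
  exists f g, order_iso P le Q le' f g.

Lemma isomorphic_refl (A : Type) (P : A -> Prop) le : isomorphic P le P le.
Proof. by exists id, id. Qed.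

Lemma order_iso_sym (A B : Type) (P : A -> Prop) le (Q : B -> Prop) le' f g :
  order_iso P le Q le' f g -> order_iso Q le' P le g f.
Proof.
case=> fK gK fmono; split=> // u v Qu Qv.
have [Pu guK] := gK _ Qu; have [Pv gvK] := gK _ Qv.
by rewrite fmono // guK gvK.
Qed.

Lemma isomorphic_sym (A B : Type) (P : A -> Prop) le (Q : B -> Prop) le' :
  isomorphic P le Q le' -> isomorphic Q le' P le.
Proof. by case=> f [g fg]; exists g, f; apply: order_iso_sym. Qed.

Lemma isomorphic_trans (A B C : Type) (P : A -> Prop) le (Q : B -> Prop) le'
    (R : C -> Prop) le'' :
  isomorphic P le Q le' -> isomorphic Q le' R le'' -> isomorphic P le R le''.
Proof.
move=> [f1 [g1 [f1K g1K f1mono]]] [f2 [g2 [f2K g2K f2mono]]].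
exists (f2 \o f1), (g1 \o g2); split=> /=.
- by move=> u /f1K [/f2K [? ->] ->].
- by move=> v /g2K [/g1K [? ->] ->].
- by move=> u v Pu Pv; rewrite f1mono // f2mono //; [case: (f1K u) | case: (f1K v)].
Qed.

Lemma eq_isomorphicl (A B : Type) (P P' : A -> Prop) le (Q : B -> Prop) le' :
  isomorphic P le Q le' -> (forall u, P u <-> P' u) -> isomorphic P' le Q le'.
Proof.
move=> [f [g [fK gK fmono]]] PP'; exists f, g; split.
- by move=> u /PP' /fK.
- by move=> v /gK [/PP'].
- by move=> u v /PP' Pu /PP' Pv; apply: fmono.
Qed.

Definition least (A : Type) (P : A -> Prop) (le : A -> A -> Prop) z :=
  P z /\ forall w, P w -> le z w.

Definition atom (A : Type) (P : A -> Prop) (le : A -> A -> Prop) a :=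
  [/\ P a, ~ least P le a & forall y, P y -> le y a -> least P le y \/ y = a].

Definition atom_cone (A : Type) (P : A -> Prop) (le : A -> A -> Prop) a y :=
  [/\ P y, le a y & forall z, P z -> le z y -> least P le z \/ le a z].

Definition not_above (A : Type) (P : A -> Prop) (le : A -> A -> Prop) a y :=
  P y /\ ~ le a y.

Section Transport.
Variables (A B : Type).
Variables (P : A -> Prop) (le : A -> A -> Prop) (Q : B -> Prop) (le' : B -> B -> Prop).
Variables (f : A -> B) (g : B -> A).
Hypothesis fg : order_iso P le Q le' f g.

Lemma order_iso_restrict (P1 : A -> Prop) (Q1 : B -> Prop) :
  (forall u, P1 u -> P u) -> (forall v, Q1 v -> Q v) ->
  (forall u, P u -> (P1 u <-> Q1 (f u))) -> order_iso P1 le Q1 le' f g.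
Proof.
have [fK gK fmono] := fg; move=> P1P Q1Q P1Q1; split.
- move=> u P1u; have Pu := P1P _ P1u.
  by split; [apply/P1Q1 | case: (fK u)].
- move=> v Q1v; have [Pv gvK] := gK _ (Q1Q _ Q1v).
  by split=> //; apply/P1Q1; rewrite ?gvK.
- by move=> u v /P1P Pu /P1P Pv; apply: fmono.
Qed.

Lemma order_iso_least z : P z -> least P le z <-> least Q le' (f z).
Proof.
have [fK gK fmono] := fg; move=> Pz; split=> -[_ zmin]; split; try by case: (fK z).
- by move=> w Qw; have [Pw <-] := gK w Qw; rewrite -fmono //; apply: zmin.
- by move=> w Pw; rewrite fmono //; apply: zmin; case: (fK w).
Qed.

Lemma order_iso_atom a : atom P le a -> atom Q le' (f a).
Proof.
have [fK gK fmono] := fg; move=> [Pa not_least_a a_min]; split.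
- by case: (fK a).
- by rewrite -order_iso_least.
move=> y Qy le_ya; have [Py gyK] := gK y Qy.
have /a_min[] // : le (g y) a by rewrite fmono // gyK.
  by rewrite order_iso_least // gyK; left.
by move=> gya; right; rewrite -gyK gya.
Qed.

Lemma order_iso_atom_cone a : P a ->
  order_iso (atom_cone P le a) le (atom_cone Q le' (f a)) le' f g.
Proof.
have [fK gK fmono] := fg; move=> Pa.
apply: order_iso_restrict => [u [] | v [] | y Py] //.
have [Qy _] := fK y Py; split=> -[_ le_ay cone]; split=> //.
- by rewrite -fmono.
- move=> z Qz le_zy; have [Pz gzK] := gK z Qz.
  have /(cone _ Pz)[least_z | le_az] : le (g z) y by rewrite fmono // gzK.
    by left; rewrite -gzK -order_iso_least.
  by right; rewrite -gzK -fmono.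
- by rewrite fmono.
- move=> z Pz le_zy; have [Qz _] := fK z Pz.
  have /(cone _ Qz)[least_z | le_az] : le' (f z) (f y) by rewrite -fmono.
    by left; rewrite order_iso_least.
  by right; rewrite fmono.
Qed.

Lemma order_iso_not_above a : P a ->
  order_iso (not_above P le a) le (not_above Q le' (f a)) le' f g.
Proof.
have [fK _ fmono] := fg; move=> Pa.
apply: order_iso_restrict => [u [] | v [] | y Py] //.
have [Qy _] := fK y Py; rewrite /not_above.
by split=> -[_ not_le]; split=> //; rewrite ?fmono // -?fmono.
Qed.

End Transport.

(** * Intervals as down-sets of forests *)

Section Interval.
Variable G : Type.
Notation tree := (tree G).

(* [graft] with the forest split by leaf counts instead of threading the unused
   trees; the two agree on forests of the right size ([graftE]). *)
Fixpoint graft_seq (u : tree) (rs : seq tree) : tree :=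
  match u with
  | Leaf => head Leaf rs
  | Node a ts => Node a ((fix graft_forest ts rs := match ts with
      | [::] => [::]
      | t :: ts' =>
          graft_seq t (take (nleaves t) rs) :: graft_forest ts' (drop (nleaves t) rs)
      end) ts rs)
  end.

Fixpoint graft_forest (ts rs : seq tree) : seq tree :=
  match ts with
  | [::] => [::]
  | t :: ts' =>
      graft_seq t (take (nleaves t) rs) :: graft_forest ts' (drop (nleaves t) rs)
  end.

Lemma graft_seq_node a ts rs : graft_seq (Node a ts) rs = Node a (graft_forest ts rs).
Proof. by []. Qed.

Lemma size_graft_forest ts rs : size (graft_forest ts rs) = size ts.
Proof. by elim: ts rs => //= t ts IH rs; rewrite IH. Qed.

Fixpoint graft_aux_forest (us rs : seq tree) : seq tree * seq tree :=
  match us with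
  | [::] => ([::], rs)
  | u :: us' =>
      let (u', rs1) := graft_aux u rs in
      let (us'', rs2) := graft_aux_forest us' rs1 in (u' :: us'', rs2)
  end.

Lemma graft_aux_node a ts rs :
  graft_aux (Node a ts) rs =
    (Node a (graft_aux_forest ts rs).1, (graft_aux_forest ts rs).2).
Proof. by []. Qed.

Lemma size_take_drop_nleaves (t : tree) ts (rs : seq tree) :
  size rs = nleaves t + sumn (map (@nleaves G) ts) ->
  size (take (nleaves t) rs) = nleaves t /\
  size (drop (nleaves t) rs) = sumn (map (@nleaves G) ts).
Proof. by move=> sz_rs; rewrite size_drop size_takel sz_rs ?addKn ?leq_addr. Qed.

Lemma graft_aux_graft_seq :
  forall u rs rest, size rs = nleaves u ->
  graft_aux u (rs ++ rest) = (graft_seq u rs, rest).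
Proof.
apply: (proj1 (@tree_forest_ind G _ (fun ts => forall rs rest,
  size rs = sumn (map (@nleaves G) ts) ->
  graft_aux_forest ts (rs ++ rest) = (graft_forest ts rs, rest)) _ _ _ _)).
- by move=> [|r [|? ?]].
- by move=> a ts IH rs rest sz_rs; rewrite graft_aux_node graft_seq_node IH.
- by move=> [|? ?].
- move=> t ts IHt IHts rs rest /size_take_drop_nleaves[sz1 sz2] /=.
  by rewrite -{1}(cat_take_drop (nleaves t) rs) -catA IHt // IHts.
Qed.

Lemma graftE u rs : size rs = nleaves u -> graft u rs = graft_seq u rs.
Proof. by move=> sz_rs; rewrite /graft -(cats0 rs) graft_aux_graft_seq ?cats0. Qed.

Fixpoint tdiff (u v : tree) : seq tree :=
  match u, v with
  | Leaf, _ => [:: v]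
  | Node _ _, Leaf => [::]
  | Node _ us, Node _ vs => (fix fdiff us vs := match us, vs with
      | u1 :: us1, v1 :: vs1 => tdiff u1 v1 ++ fdiff us1 vs1
      | _, _ => [::] end) us vs
  end.

Fixpoint fdiff (us vs : seq tree) : seq tree :=
  match us, vs with
  | u1 :: us1, v1 :: vs1 => tdiff u1 v1 ++ fdiff us1 vs1
  | _, _ => [::]
  end.

Lemma tdiff_node a b us vs : tdiff (Node a us) (Node b vs) = fdiff us vs.
Proof. by []. Qed.

Lemma tprefix_graft_seq : forall u rs, tprefix u (graft_seq u rs).
Proof.
apply: (proj1 (@tree_forest_ind G _ (fun ts => forall rs, fprefix ts (graft_forest ts rs))
  _ _ _ _)) => // a ts IH rs.
by rewrite graft_seq_node tprefix_node.
Qed.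

Lemma tdiff_graft_seq : forall u rs, size rs = nleaves u -> tdiff u (graft_seq u rs) = rs.
Proof.
apply: (proj1 (@tree_forest_ind G _ (fun ts => forall rs,
  size rs = sumn (map (@nleaves G) ts) -> fdiff ts (graft_forest ts rs) = rs) _ _ _ _)).
- by move=> [|r [|? ?]].
- by move=> a ts IH rs sz_rs; rewrite graft_seq_node tdiff_node IH.
- by move=> [|? ?].
- move=> t ts IHt IHts rs /size_take_drop_nleaves[sz1 sz2] /=.
  by rewrite IHt // IHts // cat_take_drop.
Qed.

Lemma size_tdiff : forall u v, tprefix u v -> size (tdiff u v) = nleaves u.
Proof.
apply: (proj1 (@tree_forest_ind G _ (fun ts => forall vs,
  fprefix ts vs -> size (fdiff ts vs) = sumn (map (@nleaves G) ts)) _ _ _ _)) => //.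
- by move=> a ts IH [|b vs] // [_ /IH].
- by move=> t ts IHt IHts [|v vs] //= [/IHt <- /IHts <-]; rewrite size_cat.
Qed.

Lemma graft_seq_tdiff : forall u v, tprefix u v -> graft_seq u (tdiff u v) = v.
Proof.
apply: (proj1 (@tree_forest_ind G _ (fun ts => forall vs,
  fprefix ts vs -> graft_forest ts (fdiff ts vs) = vs) _ _ _ _)) => //.
- by move=> a ts IH [|b vs] // [-> /IH]; rewrite tdiff_node graft_seq_node => ->.
- by move=> [|? ?].
- move=> t ts IHt IHts [|v vs] //= [le_tv le_ts].
  by rewrite take_size_cat ?size_tdiff // drop_size_cat ?size_tdiff // IHt // IHts.
Qed.

Lemma tdiff_mono : forall s u v, tprefix s u -> tprefix s v ->
  (tprefix u v <-> fprefix (tdiff s u) (tdiff s v)).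
Proof.
apply: (proj1 (@tree_forest_ind G _ (fun ts => forall us vs,
  fprefix ts us -> fprefix ts vs ->
  (fprefix us vs <-> fprefix (fdiff ts us) (fdiff ts vs)))
  _ _ _ _)).
- by move=> u v _ _ /=; tauto.
- move=> a ts IH [|b us] [|c vs] //.
  rewrite !tprefix_node !tdiff_node => -[<- le_us] [<- le_vs].
  by rewrite -IH //; tauto.
- by move=> [|? ?] [|? ?].
- move=> t ts IHt IHts [|u us] [|v vs] //= [le_tu le_tsus] [le_tv le_tsvs].
  by rewrite fprefix_cat ?size_tdiff // -IHt // -IHts.
Qed.

Variable ar : G -> nat.

Lemma wf_graft_seq : forall u rs, wf ar u -> all (wf ar) rs -> size rs = nleaves u ->
  wf ar (graft_seq u rs).
Proof.
apply: (proj1 (@tree_forest_ind G _ (fun ts => forall rs,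
  all (wf ar) ts -> all (wf ar) rs -> size rs = sumn (map (@nleaves G) ts) ->
  all (wf ar) (graft_forest ts rs)) _ _ _ _)) => //.
- by move=> [|r [|? ?]] //= _ /andP[].
- move=> a ts IH rs /andP[sz_ts wf_ts] wf_rs sz_rs.
  by rewrite /= size_graft_forest sz_ts IH.
- move=> t ts IHt IHts rs /andP[wf_t wf_ts] wf_rs /size_take_drop_nleaves[sz1 sz2] /=.
  move: wf_rs; rewrite -{1}(cat_take_drop (nleaves t) rs) all_cat => /andP[wf1 wf2].
  by rewrite IHt // IHts.
Qed.

Lemma wf_tdiff : forall u v, wf ar v -> tprefix u v -> all (wf ar) (tdiff u v).
Proof.
apply: (proj1 (@tree_forest_ind G _ (fun ts => forall vs, all (wf ar) vs ->
  fprefix ts vs -> all (wf ar) (fdiff ts vs)) _ _ _ _)) => //.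
- by move=> v /= ->.
- by move=> a ts IH [|b vs] // /andP[_ wf_vs] [_ /IH ->].
- move=> t ts IHt IHts [|v vs] //= /andP[wf_v wf_vs] [le_tv le_tsvs].
  by rewrite all_cat IHt // IHts.
Qed.

Lemma wf_fprefix : forall us vs, all (wf ar) vs -> fprefix us vs -> all (wf ar) us.
Proof.
apply: (proj2 (@tree_forest_ind G (fun u => forall v, wf ar v -> tprefix u v -> wf ar u)
  _ _ _ _ _)) => //.
- move=> a ts IH [|b vs] // /andP[sz_vs wf_vs] [-> le_ts].
  by rewrite /= (fprefix_size le_ts) sz_vs (IH _ wf_vs le_ts).
- move=> t ts IHt IHts [|v vs] //= /andP[wf_v wf_vs] [le_tv le_tsvs].
  by rewrite (IHt _ wf_v le_tv) (IHts _ wf_vs le_tsvs).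
Qed.

Lemma prefixE u v : wf ar u -> Defs.prefix ar u v <-> tprefix u v /\ wf ar v.
Proof.
move=> wf_u; split=> [[rs [sz_rs [wf_rs ->]]] | [le_uv wf_v]].
  by rewrite graftE //; split; [apply: tprefix_graft_seq | apply: wf_graft_seq].
exists (tdiff u v); rewrite size_tdiff // wf_tdiff // graftE ?size_tdiff //.
by rewrite graft_seq_tdiff.
Qed.

Lemma interval_iso_below s rs : wf ar s -> all (wf ar) rs -> size rs = nleaves s ->
  isomorphic (in_interval ar s (graft s rs)) (Defs.prefix ar) (below rs) fprefix.
Proof.
move=> wf_s wf_rs sz_rs; rewrite graftE //.
have le_st := tprefix_graft_seq s rs.
have sK := tdiff_graft_seq sz_rs.
exists (tdiff s), (graft_seq s); split.
- move=> u [wf_u]; rewrite !prefixE // => -[[le_su _] [le_ut _]].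
  by rewrite graft_seq_tdiff // /below -sK -tdiff_mono.
- move=> us le_us; have sz_us : size us = nleaves s by rewrite (fprefix_size le_us).
  have wf_us : wf ar (graft_seq s us).
    by apply: wf_graft_seq => //; apply: wf_fprefix le_us.
  rewrite tdiff_graft_seq //; do !split=> //; rewrite prefixE //.
  + by split=> //; apply: tprefix_graft_seq.
  + split; last exact: wf_graft_seq.
    by apply/(tdiff_mono (tprefix_graft_seq s us) le_st); rewrite sK tdiff_graft_seq.
- move=> u v [wf_u [/prefixE[] // le_su _ _]] [wf_v [/prefixE[] // le_sv _ _]].
  by rewrite prefixE // -tdiff_mono //; tauto.
Qed.

End Interval.

Lemma intervals_isoE (G : Type) (ar : G -> nat) s t s' t' :
  intervals_iso ar s t s' t' <->
  isomorphic (in_interval ar s t) (Defs.prefix ar)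
             (in_interval ar s' t') (Defs.prefix ar).
Proof.
split=> -[f [g fg]]; exists f, g.
  by case: fg => fK [gK fmono]; split.
by case: fg => fK gK fmono.
Qed.

(** * Atoms of a down-set of forests *)

Section ForestPoset.
Variable G : Type.
Notation tree := (tree G).

Definition node_at m n b (us : seq tree) : seq tree := leaves m ++ Node b us :: leaves n.

Lemma leaves_neq_node n Y1 c (ws Y2 : seq tree) : leaves n <> Y1 ++ Node c ws :: Y2.
Proof. by elim: Y1 n => [|y Y1 IH] [|n] //= [_ /IH]. Qed.

Lemma leaves_cat_leaf m n : leaves m ++ Leaf :: leaves n = leaves (m + n).+1 :> seq tree.
Proof. by rewrite /leaves -addnS nseqD. Qed.

Lemma nth_node_at m n b us i :
  nth Leaf (node_at m n b us) i = if i == m then Node b us else Leaf.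
Proof.
rewrite /node_at nth_cat size_nseq nth_nseq.
case: ltngtP => [|lt_mi|->]; rewrite ?subnn //.
by rewrite -[i - m]prednK ?subn_gt0 //= nth_nseq if_same.
Qed.

Lemma node_at_fprefix A B b us cs : fprefix us cs ->
  fprefix (node_at (size A) (size B) b us) (A ++ Node b cs :: B).
Proof.
move=> le_us; rewrite fprefix_cat_cons ?size_nseq //.
by split; try exact: leaves_fprefix.
Qed.

Lemma fprefix_node_at m n b us vs :
  fprefix (node_at m n b us) (node_at m n b vs) <-> fprefix us vs.
Proof.
rewrite fprefix_cat_cons // tprefix_node.
by split=> [[_ [_ ?] _] | ?]; do ?split; rewrite //; apply: fprefix_refl.
Qed.

Lemma fprefix_node_at_pos m n b us m' n' c vs :
  fprefix (node_at m n b us) (node_at m' n' c vs) -> m = m'.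
Proof.
move=> /(fprefix_nth m) /tprefix_is_node; rewrite !nth_node_at eqxx.
by case: eqP => // _ /(_ isT).
Qed.

Lemma fprefix_node_at_cases m n b us z : fprefix z (node_at m n b us) ->
  z = leaves (m + n).+1 \/ exists2 ws, z = node_at m n b ws & fprefix ws us.
Proof.
case/fprefix_cat_consr=> [Z1 [z0 [Z2 [-> _ /fprefix_leaves -> le_z0]]]].
move/fprefix_leaves ->.
case: z0 le_z0 => [_ | c ws [<- le_ws]]; first by left; rewrite leaves_cat_leaf.
by right; exists ws.
Qed.

Lemma node_at_iso m n b cs :
  isomorphic (fun y => exists2 us, y = node_at m n b us & fprefix us cs) fprefix
             (below cs) fprefix.
Proof.
pose sub (y : seq tree) := if nth Leaf y m is Node _ us then us else [::].
have subK us : sub (node_at m n b us) = us by rewrite /sub nth_node_at eqxx.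
exists sub, (node_at m n b); split.
- by move=> _ [us -> le_us]; rewrite subK.
- by move=> us le_us; rewrite subK; split=> //; exists us.
- by move=> _ _ [us -> _] [vs -> _]; rewrite !subK fprefix_node_at.
Qed.

Lemma least_below (rs : seq tree) z : least (below rs) fprefix z <-> z = leaves (size rs).
Proof.
split=> [[_ /(_ _ (leaves_fprefix rs))] | ->]; first exact: fprefix_leaves.
split=> [|w le_w]; first exact: leaves_fprefix.
by rewrite -(fprefix_size le_w); apply: leaves_fprefix.
Qed.

Lemma node_not_least (rs : seq tree) Y1 c ws Y2 :
  ~ least (below rs) fprefix (Y1 ++ Node c ws :: Y2).
Proof. by rewrite least_below => /esym /leaves_neq_node. Qed.

Section AtNode.
Variables (A : seq tree) (b : G) (cs B : seq tree).
Let rs := A ++ Node b cs :: B.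
Let a := node_at (size A) (size B) b (leaves (size cs)).

Lemma atom_below : atom (below rs) fprefix a.
Proof.
split; first exact/node_at_fprefix/leaves_fprefix.
  exact: node_not_least.
move=> y y_below /fprefix_node_at_cases[-> | [ws -> /fprefix_leaves ->]]; last by right.
by left; rewrite least_below size_cat /= addnS.
Qed.

Lemma atom_cone_node_pos y Y1 c ws Y2 : atom_cone (below rs) fprefix a y ->
  y = Y1 ++ Node c ws :: Y2 -> size Y1 = size A.
Proof.
move=> [y_below _ cone] Ey; pose z := node_at (size Y1) (size Y2) c (leaves (size ws)).
have le_zy : fprefix z y by rewrite Ey; apply/node_at_fprefix/leaves_fprefix.
have [/node_not_least [] | le_az] := cone z (fprefix_trans le_zy y_below) le_zy.
exact/esym/fprefix_node_at_pos/le_az.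
Qed.

Lemma atom_cone_belowP y : atom_cone (below rs) fprefix a y <->
  exists2 us, y = node_at (size A) (size B) b us & fprefix us cs.
Proof.
split=> [y_cone | [us -> le_us]].
  have [y_below le_ay _] := y_cone; have node_pos := atom_cone_node_pos y_cone.
  move: le_ay; rewrite /a /node_at => /fprefix_cat_consl.
  case=> [y1 [y0 [y2 [Ey sz_y1 _ le_y0 le_y2]]]].
  have [us E0 _] := tprefix_node_inv le_y0; subst y y0; rewrite size_nseq in sz_y1.
  have [Ey1 | [Y1 [c [ws [Y2 Ey1]]]]] := forest_leaves_or_node y1; last first.
    have := node_pos Y1 c ws (Y2 ++ Node b us :: y2).
    by rewrite -sz_y1 Ey1 -catA size_cat /= => /(_ erefl); lia.
  have [Ey2 | [Y1 [c [ws [Y2 Ey2]]]]] := forest_leaves_or_node y2; last first.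
    have := node_pos (y1 ++ Node b us :: Y1) c ws Y2.
    by rewrite -sz_y1 Ey2 -catA size_cat /= => /(_ erefl); lia.
  exists us; first by rewrite Ey1 Ey2 sz_y1 -(fprefix_size le_y2) size_nseq.
  move: y_below; rewrite /below fprefix_cat_cons //.
  by case=> _ /= [_ ?] _.
split; first exact: node_at_fprefix.
  by rewrite fprefix_node_at -(fprefix_size le_us); apply: leaves_fprefix.
move=> z z_below /fprefix_node_at_cases[-> | [ws -> le_ws]].
  by left; rewrite least_below size_cat /= addnS.
rewrite fprefix_node_at -(fprefix_size le_us) -(fprefix_size le_ws).
by right; apply: leaves_fprefix.
Qed.

Lemma not_above_belowP y :
  not_above (below rs) fprefix a y <-> below (A ++ Leaf :: B) y.
Proof.
split=> [[y_below not_le] | ].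
  have [y1 [y0 [y2 [Ey sz_y1 le_y1 le_y0 le_y2]]]] := fprefix_cat_consr y_below.
  subst y; clear y_below; case: y0 le_y0 not_le => [_ _ | c ws].
    by rewrite /below fprefix_cat_cons.
  rewrite tprefix_node => -[-> le_ws] [].
  rewrite /a -sz_y1 -(fprefix_size le_y2) -(fprefix_size le_ws).
  exact/node_at_fprefix/leaves_fprefix.
case/fprefix_cat_consr=> [y1 [y0 [y2 [-> sz_y1 le_y1 /tprefix_leaf -> le_y2]]]].
split; first by rewrite /below fprefix_cat_cons.
by rewrite /a -sz_y1 -(fprefix_size le_y2) fprefix_cat_cons ?size_nseq // => -[].
Qed.

Lemma atom_cone_below_iso :
  isomorphic (atom_cone (below rs) fprefix a) fprefix (below cs) fprefix.
Proof.
apply: eq_isomorphicl (@node_at_iso (size A) (size B) b cs) _ => y.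
by rewrite atom_cone_belowP.
Qed.

Lemma not_above_below_iso :
  isomorphic (not_above (below rs) fprefix a) fprefix (below (A ++ Leaf :: B)) fprefix.
Proof.
apply: eq_isomorphicl (isomorphic_refl _ _) _ => y.
by rewrite not_above_belowP.
Qed.

End AtNode.

Lemma atom_below_inv (rs : seq tree) a : atom (below rs) fprefix a ->
  exists A b cs B, rs = A ++ Node b cs :: B /\
                   a = node_at (size A) (size B) b (leaves (size cs)).
Proof.
case=> a_below not_least_a a_min.
have [Ea | [Y1 [c [ws [Y2 Ea]]]]] := forest_leaves_or_node a.
  by case: not_least_a; rewrite least_below Ea (fprefix_size a_below).
move: (a_below); rewrite /below Ea => /fprefix_cat_consl.
case=> [R1 [r [R2 [Ers sz_R1 _ le_r le_Y2]]]].
have [ds Er le_ws] := tprefix_node_inv le_r; subst rs r.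
exists R1, c, ds, R2; split=> //.
have [atom_in _ _] := atom_below R1 c ds R2.
have : fprefix (node_at (size R1) (size R2) c (leaves (size ds))) a.
  rewrite Ea sz_R1 -(fprefix_size le_Y2) -(fprefix_size le_ws).
  exact/node_at_fprefix/leaves_fprefix.
by case/(a_min _ atom_in) => [/node_not_least [] | ->].
Qed.

End ForestPoset.

(** * Shadows *)

Section Shadow.
Variable G : Type.
Notation tree := (tree G).

Fixpoint sh_forest (us : seq tree) : list rtree :=
  match us with
  | [::] => [::]
  | Leaf :: us' => sh_forest us'
  | u :: us' => sh u :: sh_forest us'
  end.

Lemma sh_node a ts : sh (Node a ts) = RNode (sh_forest ts).
Proof. by []. Qed.

Lemma sh_forest_leaf us : sh_forest (Leaf :: us) = sh_forest us.
Proof. by []. Qed.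

Lemma sh_forest_node a ts us :
  sh_forest (Node a ts :: us) = RNode (sh_forest ts) :: sh_forest us.
Proof. by []. Qed.

Lemma sh_forest_cat A B : sh_forest (A ++ B) = sh_forest A ++ sh_forest B.
Proof. by elim: A => [|[|a ts] A IH] //=; rewrite IH. Qed.

Lemma sh_forest_leaves n : sh_forest (leaves n) = [::].
Proof. by elim: n. Qed.

Lemma sh_forest_filter us : sh_forest us = List.map (@sh G) (filter is_node us).
Proof. by elim: us => [|[|a ts] us IH] //=; rewrite IH. Qed.

End Shadow.

Lemma sheq_insert X X' L1 L2 M1 M2 : sheq X X' ->
  sheq (RNode (L1 ++ L2)) (RNode (M1 ++ M2)) ->
  sheq (RNode (L1 ++ X :: L2)) (RNode (M1 ++ X' :: M2)).
Proof.
move=> eqX; inversion 1 as [l1 l2 l2' perm_l2 eq_l1]; subst.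
have [N1 [N2 [eq1 [eq2 EN]]]] := Forall2_app_inv_l _ _ eq_l1.
apply: (@sheq_node _ _ (N1 ++ X' :: N2)); last by apply: Forall2_app => //; constructor.
rewrite EN in perm_l2.
apply: Permutation_trans (Permutation_sym (Permutation_middle _ _ _)) _.
exact: Permutation_trans (perm_skip _ perm_l2) (Permutation_middle _ _ _).
Qed.

Lemma sh_tmap (G H : Type) (h : G -> H) :
  (forall t, sh (tmap h t) = sh t) /\
  (forall ts, sh_forest (map (tmap h) ts) = sh_forest ts).
Proof.
apply: tree_forest_ind => // [a ts IH | [|a us] ts IHt IHts] //.
- by rewrite [tmap h _]/= !sh_node IH.
- by move: IHt; rewrite [map _ _]/= [tmap h _]/= !sh_node !sh_forest_node IHts => ->.
Qed.

Lemma sh_diamond (G : Type) (rs : seq (tree G)) : sh (diamond rs) = RNode (sh_forest rs).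
Proof. by rewrite /diamond sh_node (sh_tmap Some).2. Qed.

(** * Equal shadows give isomorphic down-sets *)

Section Construction.
Variable G : Type.
Notation tree := (tree G).

Definition tbelow (r : tree) (u : tree) : Prop := tprefix u r.

Lemma tbelow_node_iso b b' (cs cs' : seq tree) :
  isomorphic (below cs) fprefix (below cs') fprefix ->
  isomorphic (tbelow (Node b cs)) tprefix (tbelow (Node b' cs')) tprefix.
Proof.
move=> [f [g [fK gK fmono]]].
exists (fun u => if u is Node _ us then Node b' (f us) else Leaf).
exists (fun u => if u is Node _ us then Node b (g us) else Leaf).
split.
- by move=> [|a us] //= [-> /fK[? ->]].
- by move=> [|a us] //= [-> /gK[? ->]].
- move=> [|a us] [|a' vs] //; rewrite /tbelow !tprefix_node => -[-> le_us] [-> le_vs].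
  by rewrite (fmono _ _ le_us le_vs); split=> -[].
Qed.

Lemma below_cons_iso r r' (l l' : seq tree) :
  isomorphic (tbelow r) tprefix (tbelow r') tprefix ->
  isomorphic (below l) fprefix (below l') fprefix ->
  isomorphic (below (r :: l)) fprefix (below (r' :: l')) fprefix.
Proof.
move=> [f1 [g1 [f1K g1K f1mono]]] [f2 [g2 [f2K g2K f2mono]]].
exists (fun us => if us is u :: us' then f1 u :: f2 us' else [::]).
exists (fun us => if us is u :: us' then g1 u :: g2 us' else [::]).
split.
- by move=> [|u us] //= [/f1K[? ->] /f2K[? ->]].
- by move=> [|u us] //= [/g1K[? ->] /g2K[? ->]].
- move=> [|u us] [|v vs] //= [le_u le_us] [le_v le_vs].
  by rewrite (f1mono _ _ le_u le_v) (f2mono _ _ le_us le_vs).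
Qed.

Lemma below_leaf_cons (l : seq tree) :
  isomorphic (below (Leaf :: l)) fprefix (below l) fprefix.
Proof.
exists behead, (cons Leaf); split=> //.
- by move=> [|u us] //= [/tprefix_leaf -> ?].
- by move=> [|u us] [|v vs] //= [/tprefix_leaf -> _] [/tprefix_leaf -> _] /=; tauto.
Qed.

Lemma below_swap x y (l : seq tree) :
  isomorphic (below (x :: y :: l)) fprefix (below (y :: x :: l)) fprefix.
Proof.
pose swap (us : seq tree) := if us is u :: v :: us' then v :: u :: us' else us.
exists swap, swap; split.
- by move=> [|u [|v us]] //=; tauto.
- by move=> [|u [|v us]] //=; tauto.
- by move=> [|u [|v us]] [|u' [|v' vs]] //= _ _; tauto.
Qed.

Lemma below_perm (l l' : seq tree) : Permutation l l' ->
  isomorphic (below l) fprefix (below l') fprefix.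
Proof.
elim=> [|x {}l {}l' _ IH|x y {}l|{}l l1 l2 _ IH1 _ IH2].
- exact: isomorphic_refl.
- exact/below_cons_iso/IH/isomorphic_refl.
- exact: below_swap.
- exact: isomorphic_trans IH1 IH2.
Qed.

Lemma below_filter_node (l : seq tree) :
  isomorphic (below l) fprefix (below (filter is_node l)) fprefix.
Proof.
elim: l => [|[|a ts] l IH] /=; first exact: isomorphic_refl.
- exact: isomorphic_trans (below_leaf_cons l) IH.
- exact/below_cons_iso/IH/isomorphic_refl.
Qed.

Lemma Forall_filter_node (P : tree -> Prop) (l : seq tree) :
  Forall P l -> Forall (fun t => P t /\ is_node t) (filter is_node l).
Proof.
elim: l => [|[|a ts] l IH] //= /Forall_cons_iff [Pt /IH Pl] //.
by constructor.
Qed.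

Let sheq_tbelow_iso (t : tree) := forall t', is_node t -> is_node t' ->
  sheq (sh t) (sh t') -> isomorphic (tbelow t) tprefix (tbelow t') tprefix.

Lemma below_Forall2_iso (X Y : seq tree) :
  Forall (fun t => sheq_tbelow_iso t /\ is_node t) X -> Forall (fun t => is_node t) Y ->
  Forall2 sheq (List.map (@sh G) X) (List.map (@sh G) Y) ->
  isomorphic (below X) fprefix (below Y) fprefix.
Proof.
elim: X Y => [|x X IH] [|y Y] FX FY; try by inversion 1.
  by move=> _; apply: isomorphic_refl.
inversion FX as [|? ? [iso_x node_x] FX']; inversion FY as [|? ? node_y FY'].
inversion 1; apply: below_cons_iso; [exact: iso_x | exact: IH].
Qed.

Lemma below_sheq_iso_Forall (rs : seq tree) : Forall sheq_tbelow_iso rs ->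
  forall rs' : seq tree, sheq (RNode (sh_forest rs)) (RNode (sh_forest rs')) ->
  isomorphic (below rs) fprefix (below rs') fprefix.
Proof.
move=> Frs rs'; inversion 1 as [l1 l2 l2' perm_l2 eq_l1]; subst.
rewrite !sh_forest_filter in perm_l2 eq_l1.
have [l3 [El3 perm3]] := Permutation_map_inv _ _ (Permutation_sym perm_l2); subst l2'.
apply: isomorphic_trans (below_filter_node rs) _.
apply: isomorphic_trans _ (isomorphic_sym (below_filter_node rs')).
apply: isomorphic_trans _ (below_perm (Permutation_sym perm3)).
apply: below_Forall2_iso eq_l1; first exact: Forall_filter_node.
apply: Permutation_Forall perm3 _.
apply: Forall_impl (Forall_filter_node (P := fun _ => True) _) => [t [] //|].
by apply/Forall_forall.
Qed.

Lemma sheq_tbelow_iso_all t : sheq_tbelow_iso t.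
Proof.
suff [] : (forall t, sheq_tbelow_iso t) /\ (forall ts, Forall sheq_tbelow_iso ts) by [].
apply: tree_forest_ind => // [a ts Fts [|a' ts'] // _ _ | u us *]; last by constructor.
by move/(below_sheq_iso_Forall Fts)/tbelow_node_iso.
Qed.

Lemma sheq_below_iso (rs rs' : seq tree) :
  sheq (RNode (sh_forest rs)) (RNode (sh_forest rs')) ->
  isomorphic (below rs) fprefix (below rs') fprefix.
Proof.
by apply/below_sheq_iso_Forall/Forall_forall => t _; apply: sheq_tbelow_iso_all.
Qed.

End Construction.

(** * Isomorphic down-sets have equal shadows *)

Section Invariance.
Variable G : Type.
Notation tree := (tree G).

Fixpoint nnodes (t : tree) : nat :=
  if t is Node _ ts then (sumn (map nnodes ts)).+1 else 0.

Definition forest_nnodes (ts : seq tree) : nat := sumn (map nnodes ts).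

Lemma forest_nnodes_node A b cs B :
  forest_nnodes (A ++ Node b cs :: B) =
    (forest_nnodes (A ++ Leaf :: B) + forest_nnodes cs).+1.
Proof. by rewrite /forest_nnodes !map_cat !sumn_cat /=; lia. Qed.

Lemma below_iso_split (A : seq tree) b cs B (A' : seq tree) b' cs' B' f g :
  order_iso (below (A ++ Node b cs :: B)) fprefix
            (below (A' ++ Node b' cs' :: B')) fprefix f g ->
  f (node_at (size A) (size B) b (leaves (size cs))) =
    node_at (size A') (size B') b' (leaves (size cs')) ->
  isomorphic (below cs) fprefix (below cs') fprefix /\
  isomorphic (below (A ++ Leaf :: B)) fprefix (below (A' ++ Leaf :: B')) fprefix.
Proof.
move=> fg fa; have [a_below _ _] := atom_below A b cs B; split.
- apply: isomorphic_trans (isomorphic_sym (atom_cone_below_iso A b cs B)) _.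
  apply: isomorphic_trans (atom_cone_below_iso A' b' cs' B').
  by rewrite -fa; exists f, g; apply: order_iso_atom_cone.
- apply: isomorphic_trans (isomorphic_sym (not_above_below_iso A b cs B)) _.
  apply: isomorphic_trans (not_above_below_iso A' b' cs' B').
  by rewrite -fa; exists f, g; apply: order_iso_not_above.
Qed.

Lemma below_iso_sheq (rs rs' : seq tree) :
  isomorphic (below rs) fprefix (below rs') fprefix ->
  sheq (RNode (sh_forest rs)) (RNode (sh_forest rs')).
Proof.
have [N] := ubnP (forest_nnodes rs); elim: N => // N IH in rs rs' *.
move=> lt_rs_N [f [g fg]].
have [Ers | [A [b [cs [B Ers]]]]] := forest_leaves_or_node rs; last first.
  subst rs; have [A' [b' [cs' [B' [Ers' fa]]]]] :=
    atom_below_inv (order_iso_atom fg (atom_below A b cs B)); subst rs'.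
  have [iso_cs iso_rest] := below_iso_split fg fa.
  rewrite forest_nnodes_node ltnS in lt_rs_N.
  rewrite !sh_forest_cat !sh_forest_node; apply: sheq_insert.
    by apply: IH iso_cs; lia.
  rewrite -(sh_forest_leaf B) -(sh_forest_leaf B') -!sh_forest_cat.
  by apply: IH iso_rest; lia.
have [Ers' | [A' [b' [cs' [B' Ers']]]]] := forest_leaves_or_node rs'.
  by rewrite Ers Ers' !sh_forest_leaves; apply: (@sheq_node _ _ [::]).
subst rs'; have [A [b [cs [B [Ers' _]]]]] :=
  atom_below_inv (order_iso_atom (order_iso_sym fg) (atom_below A' b' cs' B')).
by case: (leaves_neq_node (etrans (esym Ers) Ers')).
Qed.

End Invariance.

Unset Implicit Arguments.

Theorem theorem3p11 (G : finType) (ar : G -> nat)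
  (har : forall a : G, 0 < ar a)
  (s t s' t' : tree G) (rs rs' : seq (tree G)) :
  wf ar s -> wf ar s' ->
  (* t \ s = rs, i.e. t = s o rs with rs a forest of G-trees of size |s| *)
  size rs = nleaves s -> all (wf ar) rs -> t = graft s rs ->
  size rs' = nleaves s' -> all (wf ar) rs' -> t' = graft s' rs' ->
  (intervals_iso ar s t s' t' <-> sheq (sh (diamond rs)) (sh (diamond rs'))).
Proof.
move=> wf_s wf_s' sz_rs wf_rs -> sz_rs' wf_rs' ->.
have iso_rs := interval_iso_below wf_s wf_rs sz_rs.
have iso_rs' := interval_iso_below wf_s' wf_rs' sz_rs'.
rewrite intervals_isoE !sh_diamond; split=> [iso | /sheq_below_iso iso].
- apply: below_iso_sheq.
  exact: isomorphic_trans (isomorphic_sym iso_rs) (isomorphic_trans iso iso_rs').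
- exact: isomorphic_trans iso_rs (isomorphic_trans iso (isomorphic_sym iso_rs')).
Qed.
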